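(* Let $G = (V, E)$ be a directed proximity graph whose finitely many nodes $V$ correspond to vectors of a finite set $\mathcal{D} \subset \mathbb{R}^d$ (each node identified with its vector), and let $q \in \mathbb{R}^d$ be a query. For a node $o$, let $\mathcal{N}_o = \{p \mid (p, o) \in E\}$. Then there exists a scalar $\bar{\mu}$ such that for every $\mu > \max(\bar{\mu}, 0)$ and every node $o$ on the search path of the greedy graph nearest neighbor search (GNNS) run with query $q' = \mu q$ and having $\mathcal{N}_o \neq \emptyset$, there is a node $p^* \in \mathcal{N}_o$ with $$p^* \in \Big\{\operatorname{argmax}_{p \in \mathcal{N}_o} \langle p, q\rangle\Big\} \cap \Big\{\operatorname{argmin}_{p \in \mathcal{N}_o} \lVert p - q'\rVert\Big\}.$$
   Context: A proximity graph on $\mathcal{D}$ is a directed graph whose nodes are the points of $\mathcal{D}$ and whose edges are chosen by some criterion (the criterion is arbitrary here). Greedy graph nearest neighbor search (GNNS) with query $x$: starting from entry nodes, it repeatedly takes the current best candidate node, inspects its neighbors in $G$, and moves toward / keeps the neighbors closest to $x$ in Euclidean distance (maintaining a bounded candidate pool), until no improvement is possible; the nodes it visits form its search path. $\lVert\cdot\rVert$ is the Euclidean norm and $\langle\cdot,\cdot\rangle$ the standard inner product. *)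

From HB Require Import structures.
From mathcomp Require Import all_boot all_order all_algebra.
Set Implicit Arguments. Unset Strict Implicit. Unset Printing Implicit Defensive.
Import Order.TTheory GRing.Theory Num.Theory.
Local Open Scope ring_scope.

Definition dotp (R : rcfType) (d : nat) (x y : 'rV[R]_d) : R :=
  \sum_(i < d) x ord0 i * y ord0 i.

Definition enorm (R : rcfType) (d : nat) (x : 'rV[R]_d) : R :=
  Num.sqrt (dotp x x).

(* in-neighbourhood N_o = { p | (p, o) \in E } of node o in the graph with
   edge relation E (E p o means (p, o) is an edge) *)
Definition in_nbrs (V : finType) (E : rel V) (o : V) : {set V} :=
  [set p | E p o].

(* Expanding the square, ||p - mu q||^2 = ||p||^2 - 2 mu <p, q> + mu^2 ||q||^2, so
   among the neighbours of a node the nearest one to mu q minimises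
   ||p||^2 - 2 mu <p, q>.  Once mu exceeds every slope
   (||a||^2 - ||b||^2) / (2 <a - b, q>) between two of the finitely many nodes,
   the linear term dominates, and a neighbour maximising <p, q> (ties broken by
   the smallest norm) is also a nearest neighbour of mu q.  The threshold does
   not depend on the node, the search path, or the GNNS procedure. *)
From mathcomp Require Import all_boot all_order all_algebra.
From mathcomp Require Import lra.
Set Implicit Arguments. Unset Strict Implicit. Unset Printing Implicit Defensive.
Import Order.TTheory GRing.Theory Num.Theory.
Local Open Scope ring_scope.

Section PenalisedArgmax.

Variables (V : finType) (R : realFieldType) (f g : V -> R).

Lemma exists_slope_bound :
  exists M : R, forall a b, f b < f a -> g a - g b <= M * (f a - f b).
Proof.
pose slope (ab : V * V) := (g ab.1 - g ab.2) / (f ab.1 - f ab.2).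
exists (\sum_ab `|slope ab|) => a b lt_ba.
have pos_df : 0 < f a - f b by rewrite subr_gt0.
have -> : g a - g b = slope (a, b) * (f a - f b) by rewrite divfK ?gt_eqF.
apply: ler_wpM2r; first exact: ltW.
apply: le_trans (ler_norm _) _.
by rewrite (bigD1 (a, b)) //= lerDl sumr_ge0.
Qed.

Lemma lex_argmax_min_penalty (mu : R) (A : {set V}) :
  (forall a b, f b < f a -> g a - g b <= mu * (f a - f b)) ->
  A != set0 ->
  exists2 x, x \in A &
    (forall y, y \in A -> f y <= f x) /\
    (forall y, y \in A -> g x - mu * f x <= g y - mu * f y).
Proof.
move=> slope_mu /set0Pn[x0 Ax0].
case: (@arg_maxP _ R V x0 (fun y => y \in A) f Ax0) => xm Axm max_xm.
pose B := [set y in A | f y == f xm].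
have Bxm : xm \in B by rewrite inE Axm eqxx.
case: (@arg_minP _ R V xm (fun y => y \in B) g Bxm) => x.
rewrite inE => /andP[Ax /eqP fx] min_x.
exists x => //; split=> [y Ay | y Ay]; first by rewrite fx; apply: max_xm.
have [fy | fy_neq] := eqVneq (f y) (f xm).
  have : g x <= g y by apply: min_x; rewrite inE Ay fy eqxx.
  by rewrite fx fy; lra.
have lt_fy : f y < f x by rewrite fx lt_neqAle fy_neq; apply: max_xm.
have := slope_mu _ _ lt_fy; lra.
Qed.

End PenalisedArgmax.

Lemma dotp_subZ (R : rcfType) (d : nat) (a q : 'rV[R]_d) (mu : R) :
  dotp (a - mu *: q) (a - mu *: q) =
  dotp a a - 2 * mu * dotp a q + mu ^+ 2 * dotp q q.
Proof.
rewrite /dotp !mulr_sumr -sumrB -big_split /=.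
by apply: eq_bigr => i _; rewrite !mxE; lra.
Qed.

Lemma enorm_subZ_le (R : rcfType) (d : nat) (a b q : 'rV[R]_d) (mu : R) :
  dotp a a - 2 * mu * dotp a q <= dotp b b - 2 * mu * dotp b q ->
  enorm (a - mu *: q) <= enorm (b - mu *: q).
Proof. by move=> le_ab; apply: ler_wsqrtr; rewrite !dotp_subZ lerD2r. Qed.

Theorem theorem2 (R : rcfType) (d : nat) (V : finType)
    (vec : V -> 'rV[R]_d) (vec_inj : injective vec)
    (E : rel V) (q : 'rV[R]_d) (search_path : 'rV[R]_d -> {set V}) :
  exists mubar : R,
    forall mu : R, Num.max mubar 0 < mu ->
    forall o : V, o \in search_path (mu *: q) ->
      in_nbrs E o != set0 ->
      exists2 pstar : V, pstar \in in_nbrs E o &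
        (forall p, p \in in_nbrs E o -> dotp (vec p) q <= dotp (vec pstar) q) /\
        (forall p, p \in in_nbrs E o ->
           enorm (vec pstar - mu *: q) <= enorm (vec p - mu *: q)).
Proof.
pose sqnorm p := dotp (vec p) (vec p).
pose twice_dot p := 2 * dotp (vec p) q.
have [M slope_M] := exists_slope_bound twice_dot sqnorm.
exists M => mu; rewrite gt_max => /andP[lt_M_mu _] o _ nbrs_o.
have slope_mu a b : twice_dot b < twice_dot a ->
    sqnorm a - sqnorm b <= mu * (twice_dot a - twice_dot b).
  move=> lt_ba; apply: le_trans (slope_M _ _ lt_ba) _.
  by rewrite ler_wpM2r ?subr_ge0 ?ltW.
have [ps nbr_ps [max_ps min_ps]] := lex_argmax_min_penalty slope_mu nbrs_o.
exists ps => //; split=> p nbr_p.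
  by have := max_ps _ nbr_p; rewrite /twice_dot; lra.
by apply: enorm_subZ_le; have := min_ps _ nbr_p; rewrite /sqnorm /twice_dot; lra.
Qed.
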